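(* Let $H=(V,E)$ be a graph and let $\theta\in(\mathbb{S}^1)^V$ be a stable state on $H$ with $\rho_1(\theta)\in[0,1]$. Then for all $0<\gamma<\beta\le\pi/2$, \[e(\mathcal{C}_\beta,\mathcal{C}_\beta)\ \ge\ e(\mathcal{C}_{\pi/2},\mathcal{C}_\beta)\ \ge\ \sin(\beta-\gamma)\, e(\mathcal{C}_\beta,\mathcal{C}_\gamma^c).\]
   Context: For a graph $H$ with adjacency matrix $A$, $\mathcal{E}_H(\theta)=\frac12\sum_{u,v\in V}A_{u,v}(1-\cos(\theta_u-\theta_v))$ for $\theta\in(\mathbb{S}^1)^V$. A stable state is $\theta$ with $\nabla\mathcal{E}_H(\theta)=0$ and $\nabla^2\mathcal{E}_H(\theta)$ positive semidefinite. $\rho_1(\theta)=|V|^{-1}\sum_{v\in V}e^{i\theta_v}$. Viewing $\mathbb{S}^1$ as $(-\pi,\pi]$, $\mathcal{C}_\beta=\{v\in V:|\theta_v|\ge\beta\}$ and $\mathcal{C}_\gamma^c=V\setminus\mathcal{C}_\gamma$. For $X,Y\subseteq V$, $e(X,Y)=\sum_{x\in X,y\in Y}A_{x,y}$. *)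

From HB Require Import structures.
From mathcomp Require Import all_boot all_order all_algebra.
From mathcomp Require Import all_classical all_reals all_analysis.
Set Implicit Arguments. Unset Strict Implicit. Unset Printing Implicit Defensive.
Import Order.TTheory GRing.Theory Num.Theory.
Local Open Scope ring_scope.

Section Kuramoto.
Variables (R : realType) (V : finType).

Definition simple_graph (adj : rel V) : Prop :=
  symmetric adj /\ irreflexive adj.

Definition adjm (adj : rel V) (u v : V) : R := (adj u v)%:R.

Definition energy (adj : rel V) (theta : V -> R) : R :=
  2^-1 * \sum_(u : V) \sum_(v : V) adjm adj u v * (1 - cos (theta u - theta v)).

Definition partial (i : V) (f : (V -> R) -> R) (x : V -> R) : R :=
  derive1 (fun t : R => f (fun v => x v + t * (v == i)%:R)) 0.

Definition gradient (f : (V -> R) -> R) (x : V -> R) (i : V) : R :=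
  partial i f x.
Definition hessian (f : (V -> R) -> R) (x : V -> R) (i j : V) : R :=
  partial j (partial i f) x.

Definition psd (M : V -> V -> R) : Prop :=
  forall y : V -> R, 0 <= \sum_(i : V) \sum_(j : V) y i * M i j * y j.

Definition stable_state (adj : rel V) (theta : V -> R) : Prop :=
  (forall i, gradient (energy adj) theta i = 0) /\ psd (hessian (energy adj) theta).

(* theta in (S^1)^V, with S^1 viewed as (-pi, pi]. *)
Definition angles (theta : V -> R) : Prop :=
  forall v, - pi < theta v /\ theta v <= pi.

(* rho_1(theta) = |V|^-1 sum_v e^{i theta_v}: real and imaginary parts. *)
Definition rho1_re (theta : V -> R) : R := (#|V|%:R)^-1 * \sum_(v : V) cos (theta v).
Definition rho1_im (theta : V -> R) : R := (#|V|%:R)^-1 * \sum_(v : V) sin (theta v).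

(* rho_1(theta) is in [0,1] (as a subset of C). *)
Definition rho1_in01 (theta : V -> R) : Prop :=
  rho1_im theta = 0 /\ 0 <= rho1_re theta <= 1.

Definition Cset (theta : V -> R) (b : R) : {set V} := [set v | b <= `|theta v|].
Definition Cset_c (theta : V -> R) (b : R) : {set V} := ~: Cset theta b.

Definition eXY (adj : rel V) (X Y : {set V}) : R :=
  \sum_(x in X) \sum_(y in Y) adjm adj x y.

End Kuramoto.

(* Stationarity gives the force balance  sum_v A_uv sin (th_u - th_v) = 0  at every
   vertex, and the nonnegative diagonal of the Hessian gives
   sum_v A_uv cos (th_u - th_v) >= 0.  Split C_beta into the far band F = C_(pi/2)
   and the mid band M = C_beta minus F, and let Z = C_gamma^c.
   At a far vertex u, cos th_v = cos th_u cos (th_u - th_v) + sin th_u sin (th_u - th_v),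
   so sum_v A_uv cos th_v <= 0; as cos th_v >= sin (beta - gamma) on Z and
   cos th_v >= 0 off F, this yields sin (beta - gamma) e(F,Z) <= e(F,F).
   For the mid band, weighting the force balance by w_u = sg th_u on M (0 elsewhere)
   gives sum_(u,v) A_uv (w_u - w_v) sin (th_u - th_v) = 0, where each pair
   contributes at least sin (beta - gamma) across M x Z, at least -1 across M x F
   and at least 0 otherwise; hence sin (beta - gamma) e(M,Z) <= e(M,F).
   Adding the two bounds and using e(M,F) = e(F,M) gives the second inequality;
   the first one is F being a subset of C_beta. *)

From HB Require Import structures.
From mathcomp Require Import all_boot all_order all_algebra.
From mathcomp Require Import all_classical all_reals all_analysis.
From mathcomp Require Import ring lra.
Set Implicit Arguments. Unset Strict Implicit. Unset Printing Implicit Defensive.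
Import Order.TTheory GRing.Theory Num.Theory.
Local Open Scope ring_scope.

Section RealTrig.
Variable R : realType.
Implicit Types a b d x : R.

Lemma sin_ge_sin_between d x : 0 <= d -> d <= x -> x <= pi - d -> sin d <= sin x.
Proof.
move=> d0 dx xpd; have pi0 := pi_gt0 R.
have rising y : d <= y -> y <= pi / 2 -> sin d <= sin y.
  move=> dy ypi; rewrite leNgt ltr_sin ?in_itv /= -?leNgt //; apply/andP; split; lra.
have [xpi|xpi] := lerP x (pi / 2); first exact: rising.
have -> : sin x = sin (pi - x) by rewrite sinB sinpi cospi mul0r sub0r mulN1r opprK.
apply: rising; lra.
Qed.

Lemma sin_sub_ge0 a b : `|b| <= a -> a <= pi / 2 -> 0 <= sin (a - b).
Proof.
move=> ba api; have := ler_norm b; have := ler_norm (- b); rewrite normrN.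
move=> hNb hb; apply: sin_ge0_pi; apply/andP; split; lra.
Qed.

Lemma cos_le0_far x : pi / 2 <= `|x| -> `|x| <= pi -> cos x <= 0.
Proof.
move=> h1 h2; rewrite -cos_norm -[`|x|](subrK (pi / 2)) cosDpihalf oppr_le0.
apply: sin_ge0_pi; apply/andP; split; lra.
Qed.

Lemma sg_sin_ge0 a b : a != 0 -> b != 0 -> `|a| <= pi / 2 -> `|b| <= pi / 2 ->
  0 <= (Num.sg a - Num.sg b) * sin (a - b).
Proof.
move=> a0 b0 api bpi; have pi0 := pi_gt0 R.
have /orP[an|ap] := lt_total a0; have /orP[bn|bp] := lt_total b0;
  rewrite ?(gtr0_sg ap) ?(ltr0_sg an) ?(gtr0_sg bp) ?(ltr0_sg bn) ?subrr ?mul0r //.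
- rewrite ltr0_norm // in api; rewrite gtr0_norm // in bpi.
  have : 0 <= sin (b - a) by apply: sin_ge0_pi; apply/andP; split; lra.
  rewrite -opprB sinN; lra.
- rewrite gtr0_norm // in api; rewrite ltr0_norm // in bpi.
  have : 0 <= sin (a - b) by apply: sin_ge0_pi; apply/andP; split; lra.
  lra.
Qed.

End RealTrig.

Section EdgeSums.
Variables (R : realType) (V : finType) (adj : rel V).
Local Notation A := (adjm R adj).
Local Notation e := (eXY R adj).
Implicit Types X Y Z : {set V}.

Lemma eXY_ge0 X Y : 0 <= e X Y.
Proof. by apply: sumr_ge0 => u _; apply: sumr_ge0 => v _; rewrite ler0n. Qed.

Lemma eXY_indicator X Y :
  e X Y = \sum_u \sum_v A u v * ((u \in X)%:R * (v \in Y)%:R).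
Proof.
rewrite /eXY big_mkcond /=; apply: eq_bigr => u _.
case: (u \in X); last by rewrite big1 // => v _; rewrite mul0r mulr0.
by rewrite big_mkcond /=; apply: eq_bigr => v _; case: (v \in Y); rewrite ?mulr1 ?mulr0.
Qed.

Lemma eXY_splitl X Y Z : Z \subset X -> e X Y = e Z Y + e (X :\: Z) Y.
Proof. by move=> /finset.setIidPr XZ; rewrite /eXY (big_setID Z) XZ. Qed.

Lemma eXY_lincomb X Y Z (k : R) :
  \sum_u \sum_v A u v * ((u \in X)%:R * (k * (v \in Y)%:R - (v \in Z)%:R)) =
  k * e X Y - e X Z.
Proof.
rewrite !eXY_indicator mulr_sumr -sumrB; apply: eq_bigr => u _.
by rewrite mulr_sumr -sumrB; apply: eq_bigr => v _; ring.
Qed.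

Hypothesis adj_sym : symmetric adj.

Lemma adj_sum_swap (f : V -> V -> R) :
  \sum_u \sum_v A u v * f u v = \sum_u \sum_v A u v * f v u.
Proof.
rewrite exchange_big /=; apply: eq_bigr => u _; apply: eq_bigr => v _.
by rewrite /adjm adj_sym.
Qed.

Lemma eXY_sym X Y : e X Y = e Y X.
Proof.
rewrite !eXY_indicator adj_sum_swap; apply: eq_bigr => u _.
by apply: eq_bigr => v _; rewrite [(_ \in X)%:R * _]mulrC.
Qed.

End EdgeSums.

Section RealDerivatives.
Variable R : realType.

Lemma is_derive_affine (a c t : R) : is_derive t 1 (fun s : R => a + s * c) c.
Proof.
have -> : (fun s : R => a + s * c) = cst a + id * cst c by [].
by apply: is_derive_eq; rewrite scaler0 !add0r; exact: mulr1.
Qed.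

Lemma is_derive_sin_affine (a c t : R) :
  is_derive t 1 (fun s : R => sin (a + s * c)) (cos (a + t * c) * c).
Proof. exact: is_derive1_comp (is_derive_affine a c t). Qed.

Lemma is_derive_1cos_affine (a c t : R) :
  is_derive t 1 (fun s : R => 1 - cos (a + s * c)) (sin (a + t * c) * c).
Proof.
have dcos : is_derive t 1 (fun s : R => cos (a + s * c)) (- sin (a + t * c) * c).
  exact: is_derive1_comp (is_derive_affine a c t).
have := is_deriveB (is_derive_cst (1 : R) t 1) dcos.
by rewrite sub0r mulNr opprK.
Qed.

Lemma is_derive_mull (k : R) (f : R -> R) (x df : R) :
  is_derive x 1 f df -> is_derive x 1 (fun t => k * f t) (k * df).
Proof. by move=> h; have := is_deriveZ k h. Qed.

Lemma is_derive_bigsum (I : finType) (h : I -> R -> R) (dh : I -> R) (x : R) :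
  (forall i, is_derive x 1 (h i) (dh i)) ->
  is_derive x 1 (fun t => \sum_i h i t) (\sum_i dh i).
Proof.
move=> hd; have -> : (fun t => \sum_i h i t) = \sum_i h i.
  by apply/funext => t; rewrite fct_sumE.
by elim/big_ind2 : _ => // [|f1 d1 f2 d2 h1 h2]; [exact: is_derive_cst | exact: is_deriveD].
Qed.

End RealDerivatives.

Section EnergyDerivatives.
Variables (R : realType) (V : finType) (adj : rel V).
Hypothesis adj_sym : symmetric adj.
Local Notation A := (adjm R adj).

Lemma sum_mul_delta (f : V -> R) i : \sum_u f u * (u == i)%:R = f i.
Proof.
rewrite (bigD1 i) //= eqxx mulr1 big1 ?addr0 // => u /negbTE ->.
by rewrite mulr0.
Qed.

Lemma partial_energy (x : V -> R) i :
  partial i (energy adj) x = \sum_v A i v * sin (x i - x v).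
Proof.
pose c u v : R := (u == i)%:R - (v == i)%:R.
have shift t : energy adj (fun v => x v + t * (v == i)%:R) =
    2^-1 * \sum_u \sum_v A u v * (1 - cos (x u - x v + t * c u v)).
  congr (_ * _); apply: eq_bigr => u _; apply: eq_bigr => v _.
  by congr (_ * (1 - cos _)); rewrite /c; ring.
rewrite /partial derive1E (funext shift).
have := is_derive_mull 2^-1 (is_derive_bigsum (fun u =>
  is_derive_bigsum (fun v => is_derive_mull (A u v)
    (is_derive_1cos_affine (x u - x v) (c u v) 0)))).
move=> /= ?; rewrite derive_val.
have row_i : \sum_u \sum_v A u v * (sin (x u - x v) * (u == i)%:R) =
    \sum_v A i v * sin (x i - x v).
  rewrite -[RHS](sum_mul_delta (fun u => \sum_v A u v * sin (x u - x v))).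
  by apply: eq_bigr => u _; rewrite mulr_suml; apply: eq_bigr => v _; rewrite mulrA.
have col_i : \sum_u \sum_v A u v * (sin (x u - x v) * (v == i)%:R) =
    - \sum_v A i v * sin (x i - x v).
  rewrite exchange_big /=.
  under eq_bigr => v _ do (under eq_bigr => u _ do rewrite mulrA; rewrite -mulr_suml).
  rewrite sum_mul_delta -sumrN; apply: eq_bigr => u _.
  by rewrite /adjm adj_sym -mulrN -sinN opprB.
under eq_bigr => u _ do under eq_bigr => v _ do
  rewrite mul0r addr0 /c mulrBr mulrBr.
under eq_bigr => u _ do rewrite sumrB.
rewrite sumrB row_i col_i; lra.
Qed.

Lemma hessian_energy_diag (adj_irr : irreflexive adj) (x : V -> R) i :
  hessian (energy adj) x i i = \sum_v A i v * cos (x i - x v).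
Proof.
have shift t : partial i (energy adj) (fun v => x v + t * (v == i)%:R) =
    \sum_v A i v * sin (x i - x v + t * (1 - (v == i)%:R)).
  rewrite partial_energy; apply: eq_bigr => v _.
  by congr (_ * sin _); rewrite eqxx mulr1; ring.
rewrite /hessian {1}/partial derive1E (funext shift).
have := is_derive_bigsum (fun v => is_derive_mull (A i v)
  (is_derive_sin_affine (x i - x v) (1 - (v == i)%:R) 0)).
move=> ?; rewrite derive_val; apply: eq_bigr => v _.
rewrite mul0r addr0; have [->|_] := eqVneq v i; first by rewrite /adjm adj_irr !mul0r.
by rewrite subr0 mulr1.
Qed.

Lemma psd_diag_ge0 (M : V -> V -> R) : psd M -> forall u, 0 <= M u u.
Proof.
move=> psdM u; have := psdM (fun v => (v == u)%:R).
under eq_bigr => i _ do rewrite sum_mul_delta mulrC.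
by rewrite sum_mul_delta.
Qed.

Lemma stable_force_balance theta : stable_state adj theta ->
  forall u, \sum_v A u v * sin (theta u - theta v) = 0.
Proof. by case=> grad _ u; rewrite -partial_energy; exact: grad. Qed.

Lemma stable_stiffness theta : irreflexive adj -> stable_state adj theta ->
  forall u, 0 <= \sum_v A u v * cos (theta u - theta v).
Proof. by move=> adj_irr [_ hess] u; rewrite -hessian_energy_diag //; exact: psd_diag_ge0. Qed.

End EnergyDerivatives.

Section ForceBalance.
Variables (R : realType) (V : finType) (adj : rel V) (theta : V -> R).
Hypotheses (adj_sym : symmetric adj)
  (balance : forall u, \sum_v adjm R adj u v * sin (theta u - theta v) = 0).
Local Notation A := (adjm R adj).

Lemma sum_weighted_sin_diff (w : V -> R) :
  \sum_u \sum_v A u v * ((w u - w v) * sin (theta u - theta v)) = 0.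
Proof.
have out_zero : \sum_u \sum_v A u v * (w u * sin (theta u - theta v)) = 0.
  rewrite big1 // => u _; under eq_bigr => v _ do rewrite mulrCA.
  by rewrite -mulr_sumr balance mulr0.
have in_zero : \sum_u \sum_v A u v * (w v * sin (theta u - theta v)) = 0.
  rewrite adj_sum_swap // -[RHS]oppr0 -[in RHS]out_zero -sumrN; apply: eq_bigr => u _.
  rewrite -sumrN; apply: eq_bigr => v _.
  by rewrite -[theta v - theta u]opprB sinN mulrN mulrN.
under eq_bigr => u _ do under eq_bigr => v _ do rewrite mulrBl mulrBr.
under eq_bigr => u _ do rewrite sumrB.
by rewrite sumrB out_zero in_zero subrr.
Qed.

Lemma far_neighbour_cos_le0 u : pi / 2 <= `|theta u| <= pi ->
  (0 <= \sum_v A u v * cos (theta u - theta v)) ->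
  \sum_v A u v * cos (theta v) <= 0.
Proof.
case/andP=> far_u u_pi stiff_u.
have -> : \sum_v A u v * cos (theta v) =
    cos (theta u) * \sum_v A u v * cos (theta u - theta v)
    + sin (theta u) * \sum_v A u v * sin (theta u - theta v).
  rewrite !mulr_sumr -big_split; apply: eq_bigr => v _.
  by rewrite -[in LHS](subKr (theta u) (theta v)) [in LHS]cosB /=; ring.
by rewrite balance mulr0 addr0 mulr_le0_ge0 // cos_le0_far.
Qed.

End ForceBalance.

Section AngularBands.
Variables (R : realType) (gamma beta : R).
Hypotheses (gamma_gt0 : 0 < gamma) (gamma_lt_beta : gamma < beta)
  (beta_le_pihalf : beta <= pi / 2).
Implicit Types a b : R.

(* [lra] ignores section hypotheses, so they are reintroduced explicitly. *)
Local Ltac band_lra :=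
  have := gamma_gt0; have := gamma_lt_beta; have := beta_le_pihalf;
  have := pi_gt0 R; lra.

Definition pull_lb b : R :=
  if `|b| < gamma then sin (beta - gamma) else if pi / 2 <= `|b| then -1 else 0.

Lemma pull_lb_mid b : beta <= `|b| < pi / 2 -> pull_lb b = 0.
Proof.
case/andP=> b1 b2; rewrite /pull_lb ifF; last by apply/negbTE; rewrite -leNgt; band_lra.
by rewrite ifF //; apply/negbTE; rewrite -ltNge.
Qed.

Lemma pull_lb_le_sin a b : beta <= a < pi / 2 -> ~~ (beta <= `|b| < pi / 2) ->
  pull_lb b <= sin (a - b).
Proof.
case/andP=> a1 a2 nMb; rewrite /pull_lb; case: (ltrP `|b| gamma) => [bg|_].
  move: bg; rewrite ltr_norml => /andP[b1 b2].
  apply: sin_ge_sin_between; band_lra.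
case: (lerP (pi / 2) `|b|) => [_|bfar]; first exact: sin_geN1.
apply: sin_sub_ge0; last band_lra.
by move: nMb; rewrite bfar andbT -ltNge => /ltW/le_trans; apply.
Qed.

Lemma pull_lb_le_sg_sin a b : beta <= `|a| < pi / 2 -> ~~ (beta <= `|b| < pi / 2) ->
  pull_lb b <= Num.sg a * sin (a - b).
Proof.
move=> Ma nMb; have a0 : a != 0.
  by apply: contraTneq Ma => ->; rewrite normr0 negb_and -ltNge; band_lra.
have nb : `|Num.sg a * b| = `|b| by rewrite normrM normr_sg a0 mul1r.
rewrite -sin_sg mulrBr -normrEsg.
have -> : pull_lb b = pull_lb (Num.sg a * b) by rewrite /pull_lb nb.
by apply: pull_lb_le_sin; rewrite ?nb.
Qed.

Lemma pull_lb_le_cos b : pull_lb b <= cos b.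
Proof.
have b0 := normr_ge0 b; rewrite /pull_lb; case: (ltrP `|b| gamma) => [bg|_].
  rewrite -cos_norm -cosN -sinDpihalf; apply: sin_ge_sin_between; band_lra.
case: (lerP (pi / 2) `|b|) => [_|bfar]; first exact: cos_geN1.
apply: cos_ge0_pihalf.
by move: bfar; rewrite ltr_norml => /andP[b1 b2]; apply/andP; split; band_lra.
Qed.

Section StableBands.
Variables (V : finType) (adj : rel V) (theta : V -> R).
Hypotheses (adj_sym : symmetric adj) (theta_angles : angles theta)
  (balance : forall u, \sum_v adjm R adj u v * sin (theta u - theta v) = 0)
  (stiffness : forall u, 0 <= \sum_v adjm R adj u v * cos (theta u - theta v)).
Local Notation A := (adjm R adj).
Local Notation e := (eXY R adj).
Local Notation far := (Cset theta (pi / 2)).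
Local Notation near := (Cset_c theta gamma).

Definition mid_band : {set V} := Cset theta beta :\: far.

Definition mid_sign v : R := (v \in mid_band)%:R * Num.sg (theta v).

Lemma in_mid_band v : (v \in mid_band) = (beta <= `|theta v| < pi / 2).
Proof. by rewrite !inE -ltNge andbC. Qed.

Lemma pull_lb_bands v :
  pull_lb (theta v) = sin (beta - gamma) * (v \in near)%:R - (v \in far)%:R.
Proof.
rewrite /pull_lb !inE -ltNge; case: (ltrP `|theta v| gamma) => [near_v|_].
  have -> : (pi / 2 <= `|theta v|) = false.
    by apply/negbTE; rewrite -ltNge; band_lra.
  by rewrite mulr1 subr0.
by rewrite mulr0 sub0r; case: ifP; rewrite ?oppr0.
Qed.

Lemma mid_pull_pair u v :
  (u \in mid_band)%:R * pull_lb (theta v) + (v \in mid_band)%:R * pull_lb (theta u)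
    <= (mid_sign u - mid_sign v) * sin (theta u - theta v).
Proof.
rewrite /mid_sign !in_mid_band.
case: (boolP (beta <= `|theta u| < pi / 2)) => Mu;
  case: (boolP (beta <= `|theta v| < pi / 2)) => Mv; rewrite ?mul1r ?mul0r.
- rewrite !pull_lb_mid // addr0; apply: sg_sin_ge0; last 2 first.
  + by case/andP: Mu => _ /ltW.
  + by case/andP: Mv => _ /ltW.
  + by apply: contraTneq Mu => ->; rewrite normr0 negb_and -ltNge; band_lra.
  + by apply: contraTneq Mv => ->; rewrite normr0 negb_and -ltNge; band_lra.
- by rewrite addr0 subr0; exact: pull_lb_le_sg_sin.
- rewrite add0r sub0r mulNr -mulrN -sinN opprB; exact: pull_lb_le_sg_sin.
- by rewrite addr0 subrr mul0r.
Qed.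

Lemma mid_band_bound : sin (beta - gamma) * e mid_band near <= e mid_band far.
Proof.
have pair_sum : \sum_u \sum_v A u v *
    ((u \in mid_band)%:R * pull_lb (theta v) + (v \in mid_band)%:R * pull_lb (theta u))
    <= 0.
  rewrite -[X in _ <= X](sum_weighted_sin_diff adj_sym balance mid_sign).
  apply: ler_sum => u _; apply: ler_sum => v _.
  by apply: ler_wpM2l; [rewrite ler0n | exact: mid_pull_pair].
have one_side : \sum_u \sum_v A u v * ((u \in mid_band)%:R * pull_lb (theta v)) =
    sin (beta - gamma) * e mid_band near - e mid_band far.
  by rewrite -eXY_lincomb; under eq_bigr => u _ do under eq_bigr => v _ do
    rewrite pull_lb_bands.
move: pair_sum.
under eq_bigr => u _ do (under eq_bigr => v _ do rewrite mulrDr; rewrite big_split /=).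
rewrite big_split /= [X in _ + X](adj_sum_swap adj_sym) /= one_side.
lra.
Qed.

Lemma far_band_bound : sin (beta - gamma) * e far near <= e far far.
Proof.
rewrite -subr_le0 -eXY_lincomb; apply: sumr_le0 => u _.
under eq_bigr => v _ do rewrite -pull_lb_bands mulrCA.
rewrite -mulr_sumr; case far_u : (_ \in _); last by rewrite mul0r.
have u_far : pi / 2 <= `|theta u| <= pi.
  have [u_gt u_le] := theta_angles u.
  by move: far_u; rewrite inE => ->; rewrite ler_norml u_le andbT ltW.
rewrite mul1r (le_trans _ (far_neighbour_cos_le0 balance u_far (stiffness u))) //.
by apply: ler_sum => v _; apply: ler_wpM2l; [rewrite ler0n | exact: pull_lb_le_cos].
Qed.

End StableBands.

End AngularBands.

Lemma Cset_subset (R : realType) (V : finType) (theta : V -> R) (b b' : R) :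
  b <= b' -> Cset theta b' \subset Cset theta b.
Proof. by move=> bb'; apply/fintype.subsetP => v; rewrite !inE; exact: le_trans. Qed.

Theorem lemma2p9 (R : realType) (V : finType) (adj : rel V) (theta : V -> R)
  (hH : simple_graph adj) (hang : angles theta)
  (hstab : stable_state adj theta) (hrho : rho1_in01 theta)
  (gamma beta : R) (hg : 0 < gamma) (hgb : gamma < beta) (hb : beta <= pi / 2) :
  @eXY R V adj (Cset theta beta) (Cset theta beta)
    >= @eXY R V adj (Cset theta (pi / 2)) (Cset theta beta)
  /\ @eXY R V adj (Cset theta (pi / 2)) (Cset theta beta)
    >= sin (beta - gamma) * @eXY R V adj (Cset theta beta) (Cset_c theta gamma).
Proof.
have [adj_sym adj_irr] := hH.
have balance := stable_force_balance adj_sym hstab.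
have stiffness := stable_stiffness adj_sym adj_irr hstab.
have far_sub := Cset_subset theta hb.
split; first by rewrite [X in _ <= X](eXY_splitl _ _ _ far_sub) lerDl eXY_ge0.
rewrite [X in _ <= X](eXY_sym _ adj_sym) !(eXY_splitl _ _ _ far_sub) mulrDr.
apply: lerD.
- exact (far_band_bound hg hgb hb hang balance stiffness).
- exact (mid_band_bound hg hgb hb adj_sym balance).
Qed.
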